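(* Let $E$ be a finite set and let $\underline{I}=(I_\omega)_{\omega\in E}$ be a family of non-empty finite sets. Let $\mathrm{CC}(\underline{I})$ denote the set of causally complete spaces of input histories $\Theta$ with $E^\Theta=E$ and $I^\Theta_\omega=I_\omega$ for all $\omega\in E$, partially ordered by $\Theta'\le\Theta$ iff $\mathrm{Ext}(\Theta')\supseteq\mathrm{Ext}(\Theta)$. Then the maximal elements of $\mathrm{CC}(\underline{I})$ are exactly the causal switch spaces $\mathrm{CSwitch}(\underline{I})$.
   Context: A partial function on a family $(Y_x)_{x\in X}$ is a function $f$ with domain $\mathrm{dom}(f)\subseteq X$ and $f(x)\in Y_x$ for $x\in\mathrm{dom}(f)$; partial functions are ordered by restriction: $f\le g$ iff $\mathrm{dom}(f)\subseteq\mathrm{dom}(g)$ and $g|_{\mathrm{dom}(f)}=f$. Two partial functions are compatible if they agree on the intersection of their domains; a set $\mathcal F$ of partial functions is compatible if pairwise compatible, and then its join $\bigvee\mathcal F$ is the partial function with domain $\bigcup_{f\in\mathcal F}\mathrm{dom}(f)$ extending every $f\in\mathcal F$. A set $\Theta$ of partial functions is $\vee$-prime if for every compatible $\mathcal F\subseteq\Theta$ with $\bigvee\mathcal F\in\Theta$ we have $\bigvee\mathcal F\in\mathcal F$. A space of input histories is a finite $\vee$-prime set $\Theta$ of partial functions; its event set is $E^\Theta=\bigcup_{h\in\Theta}\mathrm{dom}(h)$ and its input sets are $I^\Theta_\omega=\{h(\omega):h\in\Theta,\ \omega\in\mathrm{dom}(h)\}$. Its extended input histories are $\mathrm{Ext}(\Theta)=\{\bigvee\mathcal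 F:\ \emptyset\neq\mathcal F\subseteq\Theta \text{ compatible}\}$, ordered by restriction. $\Theta$ satisfies the free-choice condition if the maximal elements of $\mathrm{Ext}(\Theta)$ are exactly the total functions in $\prod_{\omega\in E^\Theta}I^\Theta_\omega$. For $h\in\mathrm{Ext}(\Theta)$, $\mathrm{tips}_\Theta(h)=\mathrm{dom}(h)\setminus\bigcup\{\mathrm{dom}(k):k\in\mathrm{Ext}(\Theta),\ k<h\}$. $\Theta$ is causally complete if it satisfies the free-choice condition and $|\mathrm{tips}_\Theta(h)|=1$ for all $h\in\Theta$. Conditional sequential composition: given a space $\Theta$ and a family $(\Theta'_k)_{k\in\max\mathrm{Ext}(\Theta)}$ of spaces with $E^\Theta\cap E^{\Theta'_k}=\emptyset$, define $\Theta\rightsquigarrow(\Theta'_k)_k=\Theta\cup\{k\vee h':k\in\max\mathrm{Ext}(\Theta),\ h'\in\Theta'_k\}$. Causal switch spaces are defined by induction on $|E|$: if $E=\emptyset$, the only switch space is the empty space; otherwise $\mathrm{CSwitch}(\underline{I})$ is the set of all spaces $\Theta_{\omega_1}\rightsquigarrow(\Theta'_{i})_{i\in I_{\omega_1}}$ where $\omega_1\in E$, $\Theta_{\omega_1}=\{\{\omega_1\mapsto i\}:i\in I_{\omega_1}\}$ (whose maximal extended histories $\{\omega_1\mapsto i\}$ are identified with $i\in I_{\omega_1}$), and each $\Theta'_i\in\mathrm{CSwitch}((I_\omega)_{\omega\in E\setminus\{\omega_1\}})$. *)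

From mathcomp Require Import all_boot.
Set Implicit Arguments.
Unset Strict Implicit.
Unset Printing Implicit Defensive.

Section Histories.
Variables (E T : finType).

(* A partial function on the family (T)_{x in E}: None = undefined. *)
Definition pfun := {ffun E -> option T}.

Definition dom (f : pfun) : {set E} := [set x | f x != None].

Definition ple (f g : pfun) : bool :=
  [forall x, (f x != None) ==> (g x == f x)].
Definition plt (f g : pfun) : bool := ple f g && (f != g).

Definition pcompat (f g : pfun) : bool :=
  [forall x, ((f x != None) && (g x != None)) ==> (f x == g x)].

Definition compatible (F : {set pfun}) : bool :=
  [forall f in F, forall g in F, pcompat f g].

Definition is_join (F : {set pfun}) (h : pfun) : bool :=
  [forall x, (h x != None) == [exists f in F, f x != None]] &&
  [forall f in F, ple f h].

Definition vee_prime (Th : {set pfun}) : Prop :=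
  forall (F : {set pfun}) (h : pfun),
    F \subset Th -> compatible F -> is_join F h -> h \in Th -> h \in F.

(* A space of input histories (finiteness is automatic). *)
Definition space (Th : {set pfun}) : Prop := vee_prime Th.

Definition events (Th : {set pfun}) : {set E} :=
  [set x | [exists h in Th, h x != None]].

Definition inputs (Th : {set pfun}) (x : E) : {set T} :=
  [set v | [exists h in Th, h x == Some v]].

Definition Ext (Th : {set pfun}) : {set pfun} :=
  [set h | [exists F : {set pfun},
             [&& F \subset Th, F != set0, compatible F & is_join F h]]].

Definition maxExt (Th : {set pfun}) : {set pfun} :=
  [set h in Ext Th | [forall k in Ext Th, ple h k ==> (k == h)]].

Definition totals (Th : {set pfun}) : {set pfun} :=
  [set h : pfun | [forall x,
     if x \in events Th then
       (if h x is Some v then v \in inputs Th x else false)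
     else h x == None]].

Definition free_choice (Th : {set pfun}) : Prop := maxExt Th = totals Th.

Definition tips (Th : {set pfun}) (h : pfun) : {set E} :=
  [set x | (h x != None) && ~~ [exists k in Ext Th, plt k h && (k x != None)]].

Definition causally_complete (Th : {set pfun}) : Prop :=
  free_choice Th /\ forall h, h \in Th -> #|tips Th h| = 1.

Variable I : E -> {set T}.

Definition CC (Th : {set pfun}) : Prop :=
  [/\ space Th, causally_complete Th, events Th = [set: E]
    & forall w, inputs Th w = I w].

Definition cc_le (Th' Th : {set pfun}) : Prop := Ext Th \subset Ext Th'.

Definition maximal_CC (Th : {set pfun}) : Prop :=
  CC Th /\ forall Th', CC Th' -> cc_le Th Th' -> cc_le Th' Th.

Definition single (w : E) (i : T) : pfun :=
  [ffun x => if x == w then Some i else None].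

Definition pjoin2 (f g : pfun) : pfun :=
  [ffun x => if f x is Some v then Some v else g x].

Definition cseq (w : E) (Th' : T -> {set pfun}) : {set pfun} :=
  [set single w i | i in I w] :|:
  [set pjoin2 (single w i) h' | i in I w, h' in Th' i].

(* cswitch D Th : Th is a causal switch space on the subfamily (I w)_{w in D} *)
Inductive cswitch : {set E} -> {set pfun} -> Prop :=
| cswitch_nil : cswitch set0 set0
| cswitch_cons (D : {set E}) (w : E) (Th' : T -> {set pfun}) :
    w \in D ->
    (forall i, i \in I w -> cswitch (D :\ w) (Th' i)) ->
    cswitch D (cseq w Th').

End Histories.

From mathcomp Require Import all_boot.
From Stdlib Require Import IndefiniteDescription.
Set Implicit Arguments.
Unset Strict Implicit.
Unset Printing Implicit Defensive.

(* A causal switch space S is its own extension: two compatible histories of S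
   fix the first event to the same input and, by induction, are comparable, so a
   compatible family always contains its join. Hence S is vee-prime, every total
   input assignment belongs to S, so that its maximal extended histories are the
   total ones, and the only tip of a history is the event it fixes last: S lies
   in CC(I). Conversely, inside any Th in CC(I) a switch space S included in
   Ext Th can be grown event by event, because once inputs c have been fixed on
   some events, free choice and causal completeness provide a free event w such
   that c + {w |-> i} stays in Ext Th for every input i. Switch spaces on the
   same events form an antichain for inclusion. So a maximal Th satisfies
   Ext Th = S, whence Th = S; and a switch space Th below some Th' in CC(I) yields
   a switch space S' included in Ext Th', itself included in Ext Th = Th, so
   S' = Th and Ext Th' = Ext Th. *)

Section PartialFunctions.
Variables (E T : finType).
Local Notation pf := (pfun E T).
Implicit Types (f g h k c : pf) (F S : {set pf}) (D : {set E}) (w x y : E) (i : T).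

Definition pempty : pf := [ffun _ => None].

Lemma pleP f g : reflect (forall x v, f x = Some v -> g x = Some v) (ple f g).
Proof.
apply: (iffP forallP) => [H x v fx | H x]; first by move: (H x); rewrite fx => /eqP.
by case fx: (f x) => [v|] //=; rewrite (H _ _ fx).
Qed.

Lemma ple_refl f : ple f f.
Proof. exact/pleP. Qed.

Lemma ple_trans g f h : ple f g -> ple g h -> ple f h.
Proof. by move=> /pleP fg /pleP gh; apply/pleP => x v /fg /gh. Qed.

Lemma eq_ple f g : f = g -> ple f g.
Proof. by move=> ->; apply: ple_refl. Qed.

Lemma ple_dom f g x : ple f g -> f x != None -> g x != None.
Proof. by move=> /pleP fg; case fx: (f x) => [v|] // _; rewrite (fg _ _ fx). Qed.

Lemma ple_eq f g : ple f g -> (forall x, g x != None -> f x != None) -> f = g.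
Proof.
move=> /pleP fg gf; apply/ffunP => x.
case fx: (f x) => [v|]; first by rewrite (fg _ _ fx).
by case gx: (g x) => //; have := gf x; rewrite gx fx => /(_ isT).
Qed.

Lemma ple_anti f g : ple f g -> ple g f -> f = g.
Proof. by move=> fg gf; apply: ple_eq fg _ => x; apply: ple_dom gf. Qed.

Lemma ple_subset_dom f g : ple f g -> dom f \subset dom g.
Proof. by move=> fg; apply/subsetP => x; rewrite !inE; apply: ple_dom. Qed.

Lemma ple_card_eq f g : ple f g -> #|dom g| <= #|dom f| -> f = g.
Proof.
move=> fg le_gf; have sub_fg := ple_subset_dom fg.
have /eqP dom_fg : dom f == dom g by rewrite eqEcard sub_fg le_gf.
apply: ple_eq fg _ => x gx; have : x \in dom g by rewrite inE.
by rewrite -dom_fg inE.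
Qed.

Lemma plt_card f g : ple f g -> f != g -> #|dom f| < #|dom g|.
Proof. by move=> fg; apply: contraNT; rewrite -leqNgt => /(ple_card_eq fg) ->. Qed.

Lemma pcompatP f g :
  reflect (forall x u v, f x = Some u -> g x = Some v -> u = v) (pcompat f g).
Proof.
apply: (iffP forallP) => [H x u v fx gx | H x]; first by move: (H x); rewrite fx gx => /eqP [].
by case fx: (f x) => [u|] //=; case gx: (g x) => [v|] //=; rewrite (H _ _ _ fx gx).
Qed.

Lemma ple_pcompat f g h : ple f h -> ple g h -> pcompat f g.
Proof. by move=> /pleP fh /pleP gh; apply/pcompatP => x u v /fh hx /gh; rewrite hx => -[]. Qed.

Lemma pjoin2E f g x : pjoin2 f g x = if f x is Some v then Some v else g x.
Proof. by rewrite ffunE. Qed.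

Lemma singleE w i x : single w i x = if x == w then Some i else None :> option T.
Proof. by rewrite ffunE. Qed.

Lemma pjoin2A f g h : pjoin2 f (pjoin2 g h) = pjoin2 (pjoin2 f g) h.
Proof. by apply/ffunP => x; rewrite !pjoin2E; case: (f x). Qed.

Lemma pempty_pjoin2 f : pjoin2 pempty f = f.
Proof. by apply/ffunP => x; rewrite pjoin2E ffunE. Qed.

Lemma pjoin2_pempty f : pjoin2 f pempty = f.
Proof. by apply/ffunP => x; rewrite pjoin2E ffunE; case: (f x). Qed.

Lemma pempty_ple f : ple pempty f.
Proof. by apply/pleP => x v; rewrite ffunE. Qed.

Lemma ple_pjoin2l f g : ple f (pjoin2 f g).
Proof. by apply/pleP => x v fx; rewrite pjoin2E fx. Qed.

Lemma ple_pjoin2r f g : pcompat f g -> ple g (pjoin2 f g).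
Proof.
move=> /pcompatP fg; apply/pleP => x v gx; rewrite pjoin2E.
by case fx: (f x) => [u|] //; rewrite (fg _ _ _ fx gx).
Qed.

Lemma ple_pjoin2 f g h : ple g h -> ple (pjoin2 f g) (pjoin2 f h).
Proof. by move=> /pleP gh; apply/pleP => x v; rewrite !pjoin2E; case: (f x) => // /gh. Qed.

Lemma pjoin2_single_self w i f : pjoin2 (single w i) f w = Some i.
Proof. by rewrite pjoin2E singleE eqxx. Qed.

Lemma pjoin2_single_other w i f x : x != w -> pjoin2 (single w i) f x = f x.
Proof. by move=> /negbTE xw; rewrite pjoin2E singleE xw. Qed.

Lemma pcompat_pjoin2_single w i j f g : f w = None -> g w = None ->
  pcompat (pjoin2 (single w i) f) (pjoin2 (single w j) g) -> i = j /\ pcompat f g.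
Proof.
move=> fw gw /pcompatP fg; split; first by apply: (fg w); rewrite pjoin2_single_self.
apply/pcompatP => x u v fx gx; apply: (fg x); rewrite pjoin2_single_other //.
  by apply: contraPneq fx => ->; rewrite fw.
by apply: contraPneq gx => ->; rewrite gw.
Qed.

Lemma ple_pjoin2_single w i j f g : f w = None -> g w = None ->
  ple (pjoin2 (single w i) f) (pjoin2 (single w j) g) -> i = j /\ ple f g.
Proof.
move=> fw gw /pleP fg; split.
  by have := fg w i; rewrite !pjoin2_single_self => /(_ erefl) [].
apply/pleP => x v fx; have xw : x != w by apply: contraPneq fx => ->; rewrite fw.
by have := fg x v; rewrite !pjoin2_single_other //; apply.
Qed.

Lemma pjoin2_single_inj w i j f g : f w = None -> g w = None ->
  pjoin2 (single w i) f = pjoin2 (single w j) g -> i = j /\ f = g.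
Proof.
move=> fw gw fg; have [ij le_fg] := ple_pjoin2_single fw gw (eq_ple fg).
by have [_ le_gf] := ple_pjoin2_single gw fw (eq_ple (esym fg)); split; last exact: ple_anti.
Qed.

Lemma pjoin2_single_event D c h y i : (forall x, c x = None -> x \in D) ->
  h y = Some i -> {in D, forall z, h z != None -> z = y} ->
  pjoin2 c h = pjoin2 c (single y i).
Proof.
move=> c_D hy h_D; apply/ffunP => z; rewrite !pjoin2E singleE.
case cz: (c z) => [//|]; have [->|zy] := eqVneq z y; first exact: hy.
by case hz: (h z) => //; move: zy; rewrite (h_D z (c_D z cz)) ?hz ?eqxx.
Qed.

Lemma is_joinP F h : is_join F h ->
  (forall x, (h x != None) = [exists f in F, f x != None]) /\ {in F, forall f, ple f h}.
Proof. by case/andP => /forallP dom_h /forall_inP le_h; split=> // x; exact: eqP (dom_h x). Qed.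

Lemma is_join_max F h g : g \in F -> {in F, forall f, ple f g} -> is_join F h -> h = g.
Proof.
move=> gF le_g /is_joinP [dom_h le_h]; apply/esym/(ple_eq (le_h _ gF)) => x.
by rewrite dom_h => /exists_inP [f fF]; apply: ple_dom (le_g _ fF).
Qed.

Lemma compatibleP F :
  reflect {in F &, forall f g, pcompat f g} (compatible F).
Proof.
apply: (iffP forall_inP) => [H f g fF gF | H f fF]; first exact: forall_inP (H f fF) g gF.
by apply/forall_inP => g; apply: H.
Qed.

Lemma ExtP S h : reflect
  (exists F, [/\ F \subset S, F != set0, compatible F & is_join F h]) (h \in Ext S).
Proof.
by rewrite inE; apply: (iffP existsP) => -[F /and4P F_join]; exists F.
Qed.

Lemma mem_Ext S h : h \in S -> h \in Ext S.
Proof.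
move=> hS; apply/ExtP; exists [set h]; split.
- by rewrite sub1set.
- by apply/set0Pn; exists h; rewrite inE.
- by apply/compatibleP => f g /set1P -> /set1P ->; exact: ple_pcompat (ple_refl h) (ple_refl h).
apply/andP; split; last by apply/forall_inP => f /set1P ->; apply: ple_refl.
apply/forallP => x; apply/eqP; apply/idP/exists_inP => [hx | [f /set1P ->] //].
by exists h; rewrite ?inE.
Qed.

Lemma Ext_pjoin2 S f g :
  f \in Ext S -> g \in Ext S -> pcompat f g -> pjoin2 f g \in Ext S.
Proof.
move=> /ExtP [Ff [sub_f nz_f _ join_f]] /ExtP [Fg [sub_g _ _ join_g]] fg.
have [dom_f le_f] := is_joinP join_f; have [dom_g le_g] := is_joinP join_g.
have le_fg : {in Ff :|: Fg, forall k, ple k (pjoin2 f g)}.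
  move=> k /setUP [kf | kg]; first exact: ple_trans (le_f _ kf) (ple_pjoin2l _ _).
  exact: ple_trans (le_g _ kg) (ple_pjoin2r fg).
apply/ExtP; exists (Ff :|: Fg); split.
- by rewrite subUset sub_f sub_g.
- by case/set0Pn: nz_f => k kF; apply/set0Pn; exists k; rewrite inE kF.
- by apply/compatibleP => k l kF lF; apply: ple_pcompat (le_fg _ kF) (le_fg _ lF).
apply/andP; split; last exact/forall_inP.
apply/forallP => x; apply/eqP; apply/idP/exists_inP => [|[k kF kx]]; last first.
  by have := ple_dom (le_fg _ kF) kx.
rewrite pjoin2E; case fx: (f x) => [u|] /=.
  have /exists_inP [k kF kx] : [exists k in Ff, k x != None] by rewrite -dom_f fx.
  by exists k; rewrite ?inE ?kF.
by rewrite dom_g => /exists_inP [k kF kx]; exists k; rewrite ?inE ?kF ?orbT.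
Qed.

Lemma Ext_pjoin2_setU1 S f g :
  f \in pempty |: Ext S -> g \in Ext S -> pcompat f g -> pjoin2 f g \in Ext S.
Proof. by case/setU1P => [-> | fS] gS fg; [rewrite pempty_pjoin2 | apply: Ext_pjoin2]. Qed.

Definition compat_comparable S :=
  {in S &, forall f g, pcompat f g -> ple f g || ple g f}.

Lemma compat_comparable_setU1 S :
  compat_comparable S -> compat_comparable (pempty |: S).
Proof.
move=> S_cc f g /setU1P [->|fS] /setU1P [->|gS] fg; rewrite ?pempty_ple ?orbT //.
exact: S_cc.
Qed.

Lemma compat_comparable_join S F h : compat_comparable S ->
  F \subset S -> F != set0 -> compatible F -> is_join F h -> h \in F.
Proof.
move=> S_cc /subsetP sub_FS /set0Pn [f0 f0F] /compatibleP F_compat join_h.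
have [g gF g_max] := arg_maxnP (fun g => #|dom g|) f0F.
suff -> : h = g by [].
apply: (is_join_max gF _ join_h) => f fF.
have /orP [//|gf] := S_cc f g (sub_FS _ fF) (sub_FS _ gF) (F_compat _ _ fF gF).
by rewrite (ple_card_eq gf (g_max _ fF)) ple_refl.
Qed.

Lemma Ext_compat_comparable S : compat_comparable S -> Ext S = S.
Proof.
move=> S_cc; apply/setP => h; apply/idP/idP => [|/mem_Ext //].
case/ExtP => F [sub_FS nz_F F_compat join_h]; apply: (subsetP sub_FS).
exact: compat_comparable_join S_cc sub_FS nz_F F_compat join_h.
Qed.

Lemma compat_comparable_vee_prime S :
  compat_comparable S -> pempty \notin S -> vee_prime S.
Proof.
move=> S_cc S_nz F h sub_FS F_compat join_h hS.
have [F0|nz_F] := eqVneq F set0.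
  suff h0 : h = pempty by rewrite h0 (negbTE S_nz) in hS.
  have [dom_h _] := is_joinP join_h; apply/ffunP => x; rewrite ffunE.
  by apply/eqP; rewrite -[_ == _]negbK dom_h F0; apply/exists_inP => -[f]; rewrite in_set0.
exact: compat_comparable_join S_cc sub_FS nz_F F_compat join_h.
Qed.

End PartialFunctions.

Arguments pempty {E T}.

Section SwitchSpaces.
Variables (E T : finType) (I : E -> {set T}).
Local Notation pf := (pfun E T).
Implicit Types (f g h k t : pf) (S : {set pf}) (D : {set E}) (w x y : E) (i : T).

Lemma cseqE w (Th' : T -> {set pf}) :
  cseq I w Th' = [set pjoin2 (single w i) h | i in I w, h in pempty |: Th' i].
Proof.
apply/setP => h; rewrite inE; apply/orP/imset2P => [[/imsetP|/imset2P] | [i a iI]].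
- by case=> i iI ->; exists i pempty; rewrite ?setU11 ?pjoin2_pempty.
- by case=> i a iI aTh ->; exists i a; rewrite ?setU1r.
case/setU1P => [-> ->|aTh ->]; last by right; apply/imset2P; exists i a.
by left; rewrite pjoin2_pempty; apply: imset_f.
Qed.

Lemma mem_cseq_single w (Th' : T -> {set pf}) i : i \in I w -> single w i \in cseq I w Th'.
Proof. by move=> iI; rewrite inE imset_f. Qed.

Lemma mem_cseq_pjoin2 w (Th' : T -> {set pf}) i a :
  i \in I w -> a \in Th' i -> pjoin2 (single w i) a \in cseq I w Th'.
Proof. by move=> iI aTh; rewrite inE; apply/orP; right; apply/imset2P; exists i a. Qed.

Lemma eq_cseq w (A B : T -> {set pf}) : {in I w, A =1 B} -> cseq I w A = cseq I w B.
Proof.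
move=> AB; rewrite !cseqE; apply/setP => h.
by apply/imset2P/imset2P => -[i a iI aA ->]; exists i a; rewrite ?AB // -?AB.
Qed.

Lemma cswitch_cases D S : cswitch I D S -> (D = set0 /\ S = set0) \/
  exists w (Th' : T -> {set pf}), [/\ w \in D,
    forall i, i \in I w -> cswitch I (D :\ w) (Th' i) & S = cseq I w Th'].
Proof. by case=> [|D' w Th' wD Th'_sw]; [left | right; exists w, Th']. Qed.

Definition histories_in D S := {in S, forall h,
  [/\ exists x, h x != None, forall x, h x != None -> x \in D
    & forall x v, h x = Some v -> v \in I x]}.

Lemma cswitch_histories_in D S : cswitch I D S -> histories_in D S.
Proof.
elim=> {D S} [|D w Th' wD _ IH] h; first by rewrite inE.
rewrite cseqE => /imset2P [i a iI aTh ->].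
have a_ok x v : a x = Some v -> x != w /\ (x \in D /\ v \in I x).
  case/setU1P: aTh => [-> | aTh]; first by rewrite ffunE.
  have [_ a_dom a_val] := IH i iI a aTh.
  by move=> ax; move: (a_dom x); rewrite ax !inE => /(_ isT) /andP [-> ->]; rewrite (a_val x v).
split; first by exists w; rewrite pjoin2_single_self.
- move=> x; have [-> //|xw] := eqVneq x w; rewrite pjoin2_single_other //.
  by case ax: (a x) => [v|] // _; have [_ []] := a_ok x v ax.
move=> x v; have [->|xw] := eqVneq x w; first by rewrite pjoin2_single_self => -[<-].
by rewrite pjoin2_single_other // => /a_ok [_ []].
Qed.

Lemma cswitch_undef D w S :
  cswitch I (D :\ w) S -> {in pempty |: S, forall h, h w = None}.
Proof.
move=> /cswitch_histories_in S_hist h /setU1P [-> | hS]; first by rewrite ffunE.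
have [_ h_dom _] := S_hist h hS; case hw: (h w) => // .
by have := h_dom w; rewrite hw !inE eqxx => /(_ isT).
Qed.

Lemma pempty_notin_cswitch D S : cswitch I D S -> pempty \notin S.
Proof.
move=> /cswitch_histories_in S_hist; apply/negP => /S_hist [[x]].
by rewrite ffunE eqxx.
Qed.

Lemma cswitch_compat_comparable D S : cswitch I D S -> compat_comparable S.
Proof.
elim=> {D S} [|D w Th' wD Th'_sw IH] h k; first by rewrite inE.
rewrite cseqE => /imset2P [i a iI aTh ->] /imset2P [j b jI bTh ->].
case/(pcompat_pjoin2_single (cswitch_undef (Th'_sw _ iI) aTh)
                             (cswitch_undef (Th'_sw _ jI) bTh)) => ij ab.
subst j.
by case/orP: (compat_comparable_setU1 (IH _ iI) aTh bTh ab) => le;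
  apply/orP; [left | right]; apply: ple_pjoin2.
Qed.

Lemma Ext_cswitch D S : cswitch I D S -> Ext S = S.
Proof. by move=> /cswitch_compat_comparable /Ext_compat_comparable. Qed.

Lemma cswitch_total D S t : cswitch I D S ->
  (forall x, (t x != None) = (x \in D)) -> (forall x v, t x = Some v -> v \in I x) ->
  t \in pempty |: S.
Proof.
move=> S_sw; elim: S_sw t => {D S} [|D w Th' wD _ IH] t t_dom t_val.
  apply/setU1P; left; apply/ffunP => x; rewrite ffunE.
  by move: (t_dom x); rewrite inE; case: (t x).
have [i tw] : exists i, t w = Some i.
  by case tw: (t w) => [i|]; [exists i | move: (t_dom w); rewrite tw wD].
pose t' : pf := [ffun x => if x == w then None else t x].
have t'_in : t' \in pempty |: Th' i.
  apply: (IH i (t_val _ _ tw)) => x; rewrite ffunE.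
    by rewrite !inE; case: (eqVneq x w) => //= _; apply: t_dom.
  by case: (eqVneq x w) => // _; apply: t_val.
suff -> : t = pjoin2 (single w i) t'.
  by rewrite cseqE setU1r // (imset2_f (fun i a => pjoin2 (single w i) a)) ?(t_val _ _ tw).
apply/ffunP => x; have [->|xw] := eqVneq x w; first by rewrite pjoin2_single_self.
by rewrite pjoin2_single_other // ffunE (negbTE xw).
Qed.

Section CseqTips.
Variables (D : {set E}) (w : E) (Th' : T -> {set pf}).
Hypotheses (wD : w \in D) (Th'_sw : forall i, i \in I w -> cswitch I (D :\ w) (Th' i)).
Variables (i : T) (a : pf).
Hypotheses (iI : i \in I w) (aTh : a \in pempty |: Th' i).

Let Ext_cseq : Ext (cseq I w Th') = cseq I w Th'.
Proof. exact: Ext_cswitch (cswitch_cons wD Th'_sw). Qed.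

Lemma tips_cseq_self :
  (w \in tips (cseq I w Th') (pjoin2 (single w i) a)) = (a == pempty).
Proof.
rewrite /tips Ext_cseq inE pjoin2_single_self /=.
have [a0|a_nz] := eqVneq a pempty.
  rewrite a0 pjoin2_pempty; apply/exists_inP => -[k _ /andP [/andP [k_le k_ne] kw]].
  suff k_eq : k = single w i by rewrite k_eq eqxx in k_ne.
  by apply: ple_eq k_le _ => x; rewrite singleE; case: (eqVneq x w) => [->|].
apply/negbF/exists_inP; exists (single w i); first exact: mem_cseq_single.
rewrite singleE eqxx andbT /plt ple_pjoin2l /=; apply: contra a_nz => /eqP.
by rewrite -{1}[single w i]pjoin2_pempty => /pjoin2_single_inj [||_ <-];
  rewrite ?ffunE ?(cswitch_undef (Th'_sw iI) aTh).
Qed.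

Lemma tips_cseq_other x : x != w ->
  (x \in tips (cseq I w Th') (pjoin2 (single w i) a)) = (x \in tips (Th' i) a).
Proof.
move=> xw; rewrite /tips Ext_cseq (Ext_cswitch (Th'_sw iI)) !inE pjoin2_single_other //.
congr (_ && ~~ _); apply/exists_inP/exists_inP.
  rewrite cseqE => -[_ /imset2P [j b jI bTh ->] /andP [/andP [ba b_ne] bx]].
  have [ji le_ba] :=
    ple_pjoin2_single (cswitch_undef (Th'_sw jI) bTh) (cswitch_undef (Th'_sw iI) aTh) ba.
  subst j; rewrite pjoin2_single_other // in bx.
  exists b; first by case/setU1P: bTh bx => [->|//]; rewrite ffunE.
  by rewrite /plt bx le_ba andbT; apply: contra b_ne => /eqP ->.
move=> [b bTh /andP [/andP [ba b_ne] bx]]; exists (pjoin2 (single w i) b).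
  exact: mem_cseq_pjoin2.
rewrite /plt pjoin2_single_other // bx ple_pjoin2 //= andbT.
by apply: contra b_ne => /eqP /pjoin2_single_inj [||_ ->];
  rewrite ?(cswitch_undef (Th'_sw iI) aTh) ?(cswitch_undef (Th'_sw iI) (setU1r pempty bTh)).
Qed.

End CseqTips.

Lemma cswitch_tips D S : cswitch I D S -> {in S, forall h, exists y, tips S h = [set y]}.
Proof.
elim=> {D S} [|D w Th' wD Th'_sw IH] h; first by rewrite inE.
rewrite {1}cseqE => /imset2P [i a iI aTh ->].
case/setU1P: (aTh) => [a0 | aTh'].
  exists w; apply/setP => x; rewrite in_set1; have [->|xw] := eqVneq x w.
    by rewrite (tips_cseq_self wD Th'_sw iI aTh) a0 eqxx.
  by rewrite (tips_cseq_other wD Th'_sw iI aTh xw) a0 inE ffunE eqxx.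
have [y tips_a] := IH i iI a aTh'; exists y; apply/setP => x.
have [->|xw] := eqVneq x w; last by rewrite (tips_cseq_other wD Th'_sw iI aTh xw) tips_a.
have a_nz : a != pempty := memPn (pempty_notin_cswitch (Th'_sw i iI)) _ aTh'.
rewrite (tips_cseq_self wD Th'_sw iI aTh) in_set1 (negbTE a_nz).
have /setP /(_ y) := tips_a; rewrite set11 inE => /andP [ay _].
by apply/esym/eqP => wy; rewrite -wy (cswitch_undef (Th'_sw i iI) aTh) in ay.
Qed.

Hypothesis I_nz : forall w, I w != set0.

Lemma cswitch_antichain D S1 S2 :
  cswitch I D S1 -> cswitch I D S2 -> S1 \subset S2 -> S1 = S2.
Proof.
move=> S1_sw; elim: S1_sw S2 => {D S1} [|D w A wD A_sw IH] S2 /cswitch_cases.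
  by case=> [[_ ->] // | [w [B [w0 _ _]]]]; rewrite inE in w0.
case=> [[D0 _] | [w' [B [w'D B_sw ->]]]] sub_AB; first by rewrite D0 inE in wD.
have /set0Pn [i0 i0I] := I_nz w.
have w'w : w' = w.
  move: (subsetP sub_AB _ (mem_cseq_single A i0I)); rewrite cseqE.
  case/imset2P => j b _ _ /ffunP /(_ w').
  by rewrite pjoin2_single_self singleE; case: (eqVneq w' w).
subst w'; suff AB : {in I w, A =1 B} by rewrite (eq_cseq AB).
move=> i iI; apply: (IH i iI _ (B_sw i iI)); apply/subsetP => a aA.
move: (subsetP sub_AB _ (mem_cseq_pjoin2 iI aA)); rewrite cseqE.
case/imset2P => j b jI bB /pjoin2_single_inj [||ij ab].
- exact: (cswitch_undef (A_sw i iI) (setU1r pempty aA)).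
- exact: (cswitch_undef (B_sw j jI) bB).
subst j b; case/setU1P: bB => [a0 | //]; rewrite a0 in aA.
by rewrite (negbTE (pempty_notin_cswitch (A_sw i iI))) in aA.
Qed.

Lemma extend_total h : (forall x v, h x = Some v -> v \in I x) ->
  exists t, [/\ ple h t, forall x, t x != None & forall x v, t x = Some v -> v \in I x].
Proof.
move=> h_val; exists [ffun x => if h x is Some v then Some v else [pick v in I x]].
have pick_I x : exists2 v, [pick v in I x] = Some v & v \in I x.
  by case: pickP => [v vI | I0]; [exists v | case/set0Pn: (I_nz x) => v; rewrite I0].
split=> [|x|x v]; rewrite ?ffunE.
- by apply/pleP => x v hx; rewrite ffunE hx.
- by case: (h x) => //; have [v -> _] := pick_I x.
case hx: (h x) => [u|]; first by move=> [<-]; apply: h_val.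
by have [u -> uI] := pick_I x; move=> [<-].
Qed.

Section FullSwitchSpaces.
Variable S : {set pf}.
Hypothesis S_sw : cswitch I [set: E] S.

Let S_hist : histories_in [set: E] S := cswitch_histories_in S_sw.

Lemma total_mem_cswitch t : (forall x, t x != None) ->
  (forall x v, t x = Some v -> v \in I x) -> t != pempty -> t \in S.
Proof.
move=> t_dom t_val t_nz.
have /setU1P [t0|//] : t \in pempty |: S.
  by apply: cswitch_total S_sw _ t_val => x; rewrite in_setT t_dom.
by rewrite t0 eqxx in t_nz.
Qed.

Lemma cswitch_inputs x : inputs S x = I x.
Proof.
apply/setP => v; rewrite inE; apply/exists_inP/idP => [[h hS /eqP hx] | vI].
  by have [_ _ h_val] := S_hist hS; apply: h_val hx.
have [|t [le_t t_dom t_val]] := extend_total (h := single x v).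
  by move=> y u; rewrite singleE; case: (eqVneq y x) => [-> [<-] | //].
have tx : t x = Some v by apply/(pleP _ _ le_t); rewrite singleE eqxx.
exists t; last by rewrite tx.
by apply: total_mem_cswitch => //; apply: contra_neq (t_dom x) => ->; rewrite ffunE.
Qed.

Lemma cswitch_events : events S = [set: E].
Proof.
apply/setP => x; rewrite !inE; have /set0Pn [v] := I_nz x.
rewrite -cswitch_inputs inE => /exists_inP [h hS /eqP hx].
by apply/exists_inP; exists h; rewrite ?hx.
Qed.

Lemma cswitch_free_choice : 0 < #|E| -> free_choice S.
Proof.
move=> E_nz; apply/setP => h; rewrite /maxExt (Ext_cswitch S_sw) !inE.
rewrite cswitch_events; apply/andP/forallP => [[hS /forall_inP h_max] x | h_tot].
  have [_ _ h_val] := S_hist hS; have [t [le_t t_dom t_val]] := extend_total h_val.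
  have tS : t \in S.
    apply: total_mem_cswitch => //; apply: contraTneq hS => t0.
    have -> : h = pempty by apply: ple_anti (pempty_ple h); rewrite -t0.
    exact: pempty_notin_cswitch S_sw.
  have /eqP th := implyP (h_max t tS) le_t; rewrite -th in_setT cswitch_inputs.
  by case tx: (t x) (t_dom x) => [v|] // _; apply: t_val tx.
have h_dom x : h x != None by move: (h_tot x); rewrite in_setT; case: (h x).
have h_val x v : h x = Some v -> v \in I x.
  by move=> hx; move: (h_tot x); rewrite in_setT cswitch_inputs hx.
have hS : h \in S.
  apply: total_mem_cswitch => //; case/card_gt0P: E_nz => x _.
  by apply: contra_neq (h_dom x) => ->; rewrite ffunE.
split=> //; apply/forall_inP => k _; apply/implyP => le_hk.
by rewrite (ple_eq le_hk (fun x _ => h_dom x)).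
Qed.

Lemma cswitch_CC : 0 < #|E| -> CC I S.
Proof.
move=> E_nz; split.
- exact: compat_comparable_vee_prime (cswitch_compat_comparable S_sw) (pempty_notin_cswitch S_sw).
- split; first exact: cswitch_free_choice.
  by move=> h /(cswitch_tips S_sw) [y ->]; apply: cards1.
- exact: cswitch_events.
- exact: cswitch_inputs.
Qed.

End FullSwitchSpaces.

End SwitchSpaces.

Section Construction.
Variables (E T : finType) (I : E -> {set T}) (Th : {set pfun E T}).
Local Notation pf := (pfun E T).
Implicit Types (f g h k t c : pf) (S : {set pf}) (D : {set E}) (w x y z : E) (i : T).

Lemma minimal_history_tips D t h : h \in Th -> ple h t ->
  (forall g, [&& g \in Th, ple g t & [exists x in D, g x != None]] -> #|dom h| <= #|dom g|) ->
  {in D, forall z, h z != None -> z \in tips Th h}.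
Proof.
move=> hTh le_ht h_min z zD hz; rewrite inE hz /=.
apply/exists_inP => -[k /ExtP [G [sub_GTh _ _ join_k]] /andP [/andP [le_kh k_ne] kz]].
have [dom_k le_Gk] := is_joinP join_k.
move: kz; rewrite dom_k => /exists_inP [g gG gz].
have g_cand : [&& g \in Th, ple g t & [exists x in D, g x != None]].
  rewrite (subsetP sub_GTh _ gG) (ple_trans (ple_trans (le_Gk _ gG) le_kh) le_ht) /=.
  by apply/exists_inP; exists z.
have := leq_ltn_trans (subset_leq_card (ple_subset_dom (le_Gk _ gG))) (plt_card le_kh k_ne).
by rewrite ltnNge h_min.
Qed.

Hypothesis Th_tips : forall h, h \in Th -> #|tips Th h| = 1.

Lemma history_with_single_event D t : t \in Ext Th -> [exists x in D, t x != None] ->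
  exists h y, [/\ h \in Th, ple h t, y \in D, h y != None
                & {in D, forall z, h z != None -> z = y}].
Proof.
case/ExtP => F [sub_FTh _ _ join_t] /exists_inP [x0 x0D tx0].
have [dom_t le_Ft] := is_joinP join_t.
have [f fF fx0] : exists2 f, f \in F & f x0 != None by apply/exists_inP; rewrite -dom_t.
pose cand g := [&& g \in Th, ple g t & [exists x in D, g x != None]].
have f_cand : cand f.
  by rewrite /cand (subsetP sub_FTh _ fF) le_Ft //=; apply/exists_inP; exists x0.
have [h /and3P [hTh le_ht /exists_inP [y yD hy]] h_min] := arg_minnP (fun g => #|dom g|) f_cand.
have h_tips := minimal_history_tips hTh le_ht h_min.
have /cards1P [y' tips_h] : #|tips Th h| == 1 by rewrite Th_tips.
exists h, y; split=> // z zD hz.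
by have := h_tips z zD hz; have := h_tips y yD hy; rewrite tips_h !in_set1 => /eqP -> /eqP.
Qed.

Hypotheses (Th_fc : free_choice Th) (Th_events : events Th = [set: E])
  (Th_inputs : forall w, inputs Th w = I w).

Lemma total_mem_Ext t : (forall x, if t x is Some v then v \in I x else false) -> t \in Ext Th.
Proof.
move=> t_tot; suff : t \in maxExt Th by rewrite inE => /andP [].
by rewrite Th_fc inE; apply/forallP => x; rewrite Th_events in_setT Th_inputs.
Qed.

Lemma exists_extendable_event D c : D != set0 ->
  (forall x, (c x != None) = (x \notin D)) -> (forall x v, c x = Some v -> v \in I x) ->
  c \in pempty |: Ext Th ->
  exists2 w, w \in D & {in I w, forall i, pjoin2 c (single w i) \in Ext Th}.
Proof.
(* Otherwise choose a non-extendable input [bad x] at every [x] in [D]: the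
   resulting total [t] is in [Ext Th], and a history [h <= t] of [Th] that is
   minimal among those meeting [D] meets it in a single event [y], by causal
   completeness; then [pjoin2 c h = pjoin2 c (single y (bad y))] is in [Ext Th]. *)
move=> D_nz c_dom c_val c_Ext.
case: (boolP [exists w in D, [forall i in I w, pjoin2 c (single w i) \in Ext Th]]).
  by case/exists_inP => w wD /forall_inP; exists w.
move=> no_w; exfalso.
pose bad x := [pick i in I x | pjoin2 c (single x i) \notin Ext Th].
have badP x : x \in D -> exists2 i, bad x = Some i &
    (i \in I x) && (pjoin2 c (single x i) \notin Ext Th).
  move=> xD; rewrite /bad; case: pickP => [i bad_i | good]; first by exists i.
  case/negP: no_w; apply/exists_inP; exists x => //; apply/forall_inP => i iI.
  by move: (good i); rewrite iI => /negbFE.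
have cD x : c x = None -> x \in D by move=> cx; move: (c_dom x); rewrite cx => /esym/negbFE.
pose t : pf := [ffun x => if c x is Some v then Some v else bad x].
have t_Ext : t \in Ext Th.
  apply: total_mem_Ext => x; rewrite ffunE.
  case cx: (c x) => [v|]; first exact: c_val cx.
  by have [i -> /andP []] := badP x (cD x cx).
have t_D : [exists x in D, t x != None].
  have /set0Pn [x xD] := D_nz; apply/exists_inP; exists x; rewrite // ffunE.
  by case: (c x) => //; have [i -> _] := badP x xD.
have [h [y [hTh le_ht yD hy h_D]]] := history_with_single_event t_Ext t_D.
have cy : c y = None by move: (c_dom y); rewrite yD; case: (c y).
have [i bad_y /andP [_ bad_i]] := badP y yD.
have hy_i : h y = Some i.
  by case hy': (h y) hy => [u|] // _; move/pleP: le_ht => /(_ y u hy'); rewrite ffunE cy bad_y.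
have le_ct : ple c t by apply/pleP => z v cz; rewrite ffunE cz.
move: bad_i; rewrite -(pjoin2_single_event cD hy_i h_D).
by rewrite Ext_pjoin2_setU1 ?(mem_Ext hTh) ?(ple_pcompat le_ct le_ht).
Qed.

Lemma cswitch_in_Ext n D c : #|D| = n ->
  (forall x, (c x != None) = (x \notin D)) -> (forall x v, c x = Some v -> v \in I x) ->
  c \in pempty |: Ext Th ->
  exists2 S, cswitch I D S & {in S, forall s, pjoin2 c s \in Ext Th}.
Proof.
elim: n D c => [|n IH] D c D_card c_dom c_val c_Ext.
  by rewrite (cards0_eq D_card); exists set0 => [|s]; rewrite ?inE //; apply: cswitch_nil.
have D_nz : D != set0 by rewrite -card_gt0 D_card.
have [w wD w_ext] := exists_extendable_event D_nz c_dom c_val c_Ext.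
have sub_sw i : exists S, i \in I w -> cswitch I (D :\ w) S /\
    {in S, forall s, pjoin2 (pjoin2 c (single w i)) s \in Ext Th}.
  have [iI | _] := boolP (i \in I w); last by exists set0.
  have [||||S S_sw S_ext] := IH (D :\ w) (pjoin2 c (single w i)); last by exists S.
  - by move: D_card; rewrite (cardsD1 w D) wD => -[].
  - move=> x; rewrite pjoin2E singleE !inE negb_and negbK -c_dom.
    by case: (c x) => [v|] /=; rewrite ?orbT ?orbF //; case: (x == w).
  - move=> x v; rewrite pjoin2E singleE; case cx: (c x) => [u|].
      by move=> [<-]; apply: c_val cx.
    by case: (eqVneq x w) => // -> [<-].
  - by rewrite setU1r ?w_ext.
have [Th' Th'P] := functional_choice _ sub_sw.
exists (cseq I w Th'); first by apply: cswitch_cons wD _ => i /Th'P [].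
move=> s; rewrite cseqE => /imset2P [i a iI aTh ->]; rewrite pjoin2A.
case/setU1P: aTh => [-> | aTh]; first by rewrite pjoin2_pempty w_ext.
by have [_] := Th'P i iI; apply.
Qed.

End Construction.

Lemma CC_cswitch_sub_Ext (E T : finType) (I : E -> {set T}) (Th : {set pfun E T}) :
  CC I Th -> exists2 S, cswitch I [set: E] S & S \subset Ext Th.
Proof.
case=> _ [Th_fc Th_tips] Th_events Th_inputs.
have [|||S S_sw S_Ext] :=
  cswitch_in_Ext Th_tips Th_fc Th_events Th_inputs (erefl #|[set: E]|) (c := pempty).
- by move=> x; rewrite ffunE in_setT.
- by move=> x v; rewrite ffunE.
- exact: setU11.
by exists S => //; apply/subsetP => s /S_Ext; rewrite pempty_pjoin2.
Qed.

Theorem theorem5 (E T : finType) (I : E -> {set T}) :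
  0 < #|E| ->
  (forall w, I w != set0) ->
  forall Th : {set pfun E T},
    maximal_CC I Th <-> cswitch I [set: E] Th.
Proof.
move=> E_nz I_nz Th; split.
  case=> Th_CC Th_max; have [S S_sw S_sub] := CC_cswitch_sub_Ext Th_CC.
  have Ext_S := Ext_cswitch S_sw.
  have ExtTh_S : Ext Th \subset S.
    by rewrite -Ext_S; apply: Th_max (cswitch_CC I_nz S_sw E_nz) _; rewrite /cc_le Ext_S.
  have Th_S : Th \subset S by apply: subset_trans ExtTh_S; apply/subsetP => h /mem_Ext.
  have Th_cc : compat_comparable Th.
    move=> f g /(subsetP Th_S) fS /(subsetP Th_S) gS.
    exact: (cswitch_compat_comparable S_sw fS gS).
  suff -> : Th = S by [].
  by rewrite -(Ext_compat_comparable Th_cc); apply/eqP; rewrite eqEsubset ExtTh_S.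
move=> Th_sw; split; first exact: cswitch_CC.
move=> Th' Th'_CC; rewrite /cc_le (Ext_cswitch Th_sw) => Ext_Th'.
have [S S_sw S_sub] := CC_cswitch_sub_Ext Th'_CC.
by rewrite -(cswitch_antichain I_nz S_sw Th_sw (subset_trans S_sub Ext_Th')).
Qed.
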